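(* There exists $N$ such that for every integer $n\ge N$, the quantity $$S_n=\sum_{c=2}^{\lfloor n/2\rfloor}\binom{n}{c}(2^c-1)^{n-c}+\sum_{c=\lfloor n/2\rfloor+1}^{n-2}\binom{n}{c}(2^{n-c}-1)^{c}$$ satisfies $H_n\le S_n\le\big(1+(3/2)^{-n/3}\big)H_n$, where $H_n$ is the number of labeled split graphs with vertex set $[n]$ whose questioning set is empty.
   Context: $[n]=\{1,\dots,n\}$; labeled graphs on $[n]$ are distinct if their edge sets differ. A split partition of a graph $G$ is an ordered pair $(C',I')$ of disjoint sets (possibly empty) with $C'\cup I'=V(G)$, $C'$ a clique and $I'$ an independent set; $G$ is a split graph if it has a split partition. The questioning set of a split graph is the set of vertices $v$ for which there is a split partition with $v\in C'$ and a split partition with $v\in I'$. *)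

From Stdlib Require Import Reals.
From mathcomp Require Import all_boot.
Set Implicit Arguments. Unset Strict Implicit. Unset Printing Implicit Defensive.

(* Vertex set [n] is represented by 'I_n = {0,...,n-1}; a labeled simple graph
   is its edge set: a set of 2-element subsets of 'I_n. *)
Definition simple_graph n (E : {set {set 'I_n}}) : bool :=
  [forall e in E, #|e| == 2].

Definition adj n (E : {set {set 'I_n}}) (u v : 'I_n) : bool := [set u; v] \in E.

Definition is_clique n (E : {set {set 'I_n}}) (C : {set 'I_n}) : bool :=
  [forall u in C, forall v in C, (u != v) ==> adj E u v].

Definition is_indep n (E : {set {set 'I_n}}) (I : {set 'I_n}) : bool :=
  [forall u in I, forall v in I, ~~ adj E u v].

Definition split_partition n (E : {set {set 'I_n}}) (C I : {set 'I_n}) : bool :=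
  [&& [disjoint C & I], C :|: I == setT, is_clique E C & is_indep E I].

Definition is_split n (E : {set {set 'I_n}}) : bool :=
  [exists C, exists I, split_partition E C I].

Definition questioning n (E : {set {set 'I_n}}) : {set 'I_n} :=
  [set v | [exists C, exists I, split_partition E C I && (v \in C)]
        && [exists C, exists I, split_partition E C I && (v \in I)]].

Definition H (n : nat) : nat :=
  #|[set E : {set {set 'I_n}} |
      [&& simple_graph E, is_split E & questioning E == set0]]|.

Definition S (n : nat) : nat :=
  (\sum_(2 <= c < (n./2).+1) 'C(n, c) * (2 ^ c - 1) ^ (n - c))
  + (\sum_((n./2).+1 <= c < n - 1) 'C(n, c) * (2 ^ (n - c) - 1) ^ c).

From Stdlib Require Import Reals Lra.
From mathcomp Require Import all_boot zify.
Set Implicit Arguments. Unset Strict Implicit. Unset Printing Implicit Defensive.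

(* A split graph whose questioning set is empty has a unique split partition
   (C, ~: C), so H n is a sum over the possible clique sides C of the number
   of such "rigid" graphs with clique side C.  For a fixed C the questioning
   set is empty exactly when no independent vertex sees all of C and every
   clique vertex has a neighbour outside C; recording the neighbourhood in C
   of each independent vertex turns these graphs bijectively into maps
   ~: C -> {proper subsets of C} whose values cover C.  Hence their number
   is at most (2^c - 1)^(n - c) (zero for c < 2), and the non-covering maps,
   which all miss some vertex of C, number at most c (2^(c-1))^(n - c).
   Complementation exchanges C and ~: C, so both bounds can be applied with
   c <= n/2, where the second one is a (2/3)^(n/3) fraction of the first.
   Summing over C with the binomial identity for S n yields the theorem. *)

Lemma card_bigcup_le (I T : finType) (P : {pred I}) (F : I -> {set T}) :
  #|\bigcup_(i in P) F i| <= \sum_(i in P) #|F i|.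
Proof.
elim/big_ind2: _ => [|k1 A1 k2 A2 le1 le2|//]; first by rewrite cards0.
by rewrite (leq_trans (leq_card_setU A1 A2)) ?leq_add.
Qed.

Section SplitGraphs.

Variable n : nat.
Implicit Types (E : {set {set 'I_n}}) (C I : {set 'I_n}) (r : rel 'I_n)
  (f : {ffun 'I_n -> {set 'I_n}}).

Lemma adjC E u v : adj E u v = adj E v u.
Proof. by rewrite /adj setUC. Qed.

Lemma adj_irr E u : simple_graph E -> adj E u u = false.
Proof.
by move=> /forall_inP sE; apply/negbTE/negP => /sE; rewrite setUid cards1.
Qed.

Lemma cliqueP E C :
  reflect {in C &, forall u v, u != v -> adj E u v} (is_clique E C).
Proof.
apply: (iffP forall_inP) => [cl u v uC vC | cl u uC].
  by move: (cl u uC) => /forall_inP/(_ v vC)/implyP.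
by apply/forall_inP => v vC; apply/implyP; apply: cl.
Qed.

Lemma indepP E I : reflect {in I &, forall u v, ~~ adj E u v} (is_indep E I).
Proof.
apply: (iffP forall_inP) => [ind u v uI vI | ind u uI].
  by move: (ind u uI) => /forall_inP/(_ v vI).
by apply/forall_inP => v vI; apply: ind.
Qed.

Lemma split_partitionP E C I :
  reflect [/\ I = ~: C, is_clique E C & is_indep E I] (split_partition E C I).
Proof.
apply: (iffP and4P) => [[dis /eqP cov cl ind] | [-> cl ind]]; last first.
  by rewrite -setI_eq0 setICr setUCr.
split=> //; apply/eqP; rewrite eqEsubset -disjoints_subset disjoint_sym dis.
apply/subsetP => x; rewrite in_setC => xC.
have: x \in C :|: I by rewrite cov inE.
by rewrite inE (negbTE xC).
Qed.

Lemma questioningP E v :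
  reflect ((exists2 C, split_partition E C (~: C) & v \in C) /\
           (exists2 C, split_partition E C (~: C) & v \notin C))
          (v \in questioning E).
Proof.
rewrite inE; apply: (iffP andP) => [[] | [[C sp vC] [C' sp' vC']]].
  move=> /existsP[C /existsP[I /andP[sp vC]]] /existsP[C' /existsP[I' /andP[sp' vI]]].
  case/split_partitionP: (sp) => eI _ _; case/split_partitionP: (sp') => eI' _ _.
  by subst I I'; split; [exists C | exists C'; rewrite -?in_setC].
split; apply/existsP; [exists C | exists C']; apply/existsP; [exists (~: C) | exists (~: C')].
  by rewrite sp vC.
by rewrite sp' in_setC vC'.
Qed.

Lemma doubleton_eq (T : finType) (a b x y : T) :
  [set a; b] = [set x; y] -> (x = a /\ y = b) \/ (x = b /\ y = a).
Proof.
move=> e; have ax : a \in [set x; y] by rewrite -e set21.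
have bx : b \in [set x; y] by rewrite -e set22.
have xa : x \in [set a; b] by rewrite e set21.
have ya : y \in [set a; b] by rewrite e set22.
move: ax bx xa ya; rewrite !in_set2.
by do 4 (case/orP=> /eqP ?; subst); auto.
Qed.

Definition graph_of r : {set {set 'I_n}} := [set [set x; y] | x, y in r x].

Lemma adj_graph_of r : symmetric r -> adj (graph_of r) =2 r.
Proof.
move=> rC x y; apply/imset2P/idP => [[a b _] | rxy]; last by exists x y.
by move=> rab /doubleton_eq [[<- <-] | [<- <-]]; rewrite // rC.
Qed.

Lemma graph_of_simple r : irreflexive r -> simple_graph (graph_of r).
Proof.
move=> rI; apply/forall_inP => _ /imset2P[x y _ rxy ->].
by rewrite cards2; case: (eqVneq x y) rxy => [->|//]; rewrite unfold_in rI.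
Qed.

Lemma simple_graph_eq E E' :
  simple_graph E -> simple_graph E' -> adj E =2 adj E' -> E = E'.
Proof.
suff sub : forall A B : {set {set 'I_n}}, simple_graph A -> adj A =2 adj B -> A \subset B.
  by move=> sE sE' eE; apply/eqP; rewrite eqEsubset !sub // => x y; rewrite eE.
move=> A B /forall_inP sA eAB; apply/subsetP => e eA.
have := sA e eA; case/cards2P => x [y [_ ee]]; subst e.
by have := eAB x y; rewrite /adj eA.
Qed.

Definition compl E : {set {set 'I_n}} := graph_of (fun x y => (x != y) && ~~ adj E x y).

Lemma compl_adj E x y : adj (compl E) x y = (x != y) && ~~ adj E x y.
Proof. by apply: adj_graph_of => u v; rewrite eq_sym adjC. Qed.

Lemma compl_simple E : simple_graph (compl E).
Proof. by apply: graph_of_simple => x; rewrite eqxx. Qed.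

Lemma complK E : simple_graph E -> compl (compl E) = E.
Proof.
move=> sE; apply: simple_graph_eq => //; first exact: compl_simple.
move=> x y; rewrite !compl_adj.
by case: (eqVneq x y) => [->|] /=; rewrite ?negbK ?adj_irr.
Qed.

Lemma compl_clique E C : simple_graph E -> is_clique (compl E) C = is_indep E C.
Proof.
move=> sE; apply/cliqueP/indepP => cl u v uC vC.
  case: (eqVneq u v) => [<- | uv]; first by rewrite adj_irr.
  by move: (cl u v uC vC uv); rewrite compl_adj uv.
by move=> uv; rewrite compl_adj uv cl.
Qed.

Lemma compl_indep E C : is_indep (compl E) C = is_clique E C.
Proof.
apply/indepP/cliqueP => ind u v uC vC; last first.
  by rewrite compl_adj; case: eqVneq => //= uv; rewrite ind.
by move=> uv; move: (ind u v uC vC); rewrite compl_adj uv negbK.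
Qed.

Lemma compl_split_partition E C I : simple_graph E ->
  split_partition (compl E) C I = split_partition E I C.
Proof.
move=> sE; rewrite /split_partition compl_clique // compl_indep disjoint_sym setUC.
by case: is_clique; case: is_indep; rewrite ?andbF.
Qed.

Lemma compl_questioning E : simple_graph E -> questioning (compl E) = questioning E.
Proof.
move=> sE; apply/setP => v; apply/questioningP/questioningP;
  move=> [[C spC vC] [C' spC' vC']];
  [rewrite !compl_split_partition // in spC spC' | ];
  (split; [exists (~: C') | exists (~: C)]);
  rewrite ?compl_split_partition ?setCK ?in_setC ?negbK //.
Qed.

Lemma questioning0_unique E C C' : questioning E = set0 ->
  split_partition E C (~: C) -> split_partition E C' (~: C') -> C = C'.
Proof.
move=> q0 sp sp'; apply/setP => v; apply/idP/idP => vC; apply: contraT => vC';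
  suff: v \in questioning E by rewrite q0 inE.
  by apply/questioningP; split; [exists C | exists C'].
by apply/questioningP; split; [exists C' | exists C].
Qed.

Definition rigid E C : Prop :=
  (forall u, u \in C -> exists2 w, w \notin C & adj E u w) /\
  (forall v, v \notin C -> exists2 u, u \in C & ~~ adj E u v).

Lemma rigid_unique E C C' : split_partition E C (~: C) -> rigid E C ->
  split_partition E C' (~: C') -> C' = C.
Proof.
case/split_partitionP=> _ /cliqueP cl _ [nbC nbI].
case/split_partitionP=> _ /cliqueP cl' /indepP ind'.
have ind'_out u w : u \notin C' -> w \notin C' -> ~~ adj E u w.
  by move=> uC' wC'; apply: ind'; rewrite in_setC.
have subC : C \subset C'.
  apply/subsetP => u uC; apply: contraT => uC'.
  have [w wC uw] := nbC u uC.
  have wC' : w \in C' by apply: contraT => wC'; move: (ind'_out u w uC' wC'); rewrite uw.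
  have [u' u'C u'w] := nbI w wC.
  have u'C' : u' \notin C'.
    apply: contra u'w => u'C'; rewrite adjC cl' //.
    by apply: contraNneq wC => ->.
  have uu' : u != u' by apply: contraNneq u'w => <-; rewrite uw.
  by move: (ind'_out u u' uC' u'C'); rewrite cl.
apply/eqP; rewrite eqEsubset subC andbT; apply/subsetP => x xC'.
apply: contraT => xC; have [u uC ux] := nbI x xC.
have xu : x != u by apply: contraNneq xC => ->.
by move: ux; rewrite adjC cl' // (subsetP subC).
Qed.

(* An independent vertex adjacent to all of C can be moved to the clique. *)
Lemma dominating_questioning E C v :
  split_partition E C (~: C) -> v \notin C -> (forall u, u \in C -> adj E u v) ->
  v \in questioning E.
Proof.
move=> sp vC dom; apply/questioningP; split; last by exists C.
exists (v |: C); last by rewrite setU11.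
case/split_partitionP: sp => _ /cliqueP cl /indepP ind; apply/split_partitionP; split=> //.
  apply/cliqueP => x y; rewrite !in_setU1.
  case/orP=> [/eqP -> | xC]; case/orP=> [/eqP -> | yC]; rewrite ?eqxx //.
  - by rewrite adjC => _; apply: dom.
  - by move=> _; apply: dom.
  - exact: cl.
by apply/indepP => x y; rewrite !in_setC !in_setU1 !negb_or => /andP[_ ?] /andP[_ ?];
  apply: ind; rewrite in_setC.
Qed.

(* A clique vertex without neighbours outside C can be moved out of the clique. *)
Lemma isolated_questioning E C u : simple_graph E ->
  split_partition E C (~: C) -> u \in C -> (forall w, w \notin C -> ~~ adj E u w) ->
  u \in questioning E.
Proof.
move=> sE sp uC iso; apply/questioningP; split; first by exists C.
exists (C :\ u); last by rewrite in_setD1 eqxx.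
case/split_partitionP: sp => _ /cliqueP cl /indepP ind; apply/split_partitionP; split=> //.
  by apply/cliqueP => x y; rewrite !in_setD1 => /andP[_ xC] /andP[_ yC]; apply: cl.
apply/indepP => x y; rewrite !in_setC !in_setD1 !negb_and !negbK.
case/orP=> [/eqP -> | xC]; case/orP=> [/eqP -> | yC].
- by rewrite adj_irr.
- exact: iso.
- by rewrite adjC; apply: iso.
- by apply: ind; rewrite in_setC.
Qed.

Lemma questioning0_rigid E C : simple_graph E -> split_partition E C (~: C) ->
  questioning E = set0 <-> rigid E C.
Proof.
move=> sE sp; split=> [q0 | rig]; last first.
  apply/setP => v; rewrite in_set0; apply/negP => /questioningP[[C1 sp1 vC1] [C2 sp2 vC2]].
  by move: vC2; rewrite (rigid_unique sp rig sp1) (rigid_unique sp rig sp2) in vC1 *; rewrite vC1.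
have notq v : v \notin questioning E by rewrite q0 inE.
split=> [u uC | v vC].
  have /existsP[w /andP[wC uw]] : [exists w, (w \notin C) && adj E u w].
    apply: contraT => /existsPn none; move: (notq u).
    by rewrite (isolated_questioning sE sp uC) // => w wC; move: (none w); rewrite wC.
  by exists w.
have /existsP[u /andP[uC uv]] : [exists u, (u \in C) && ~~ adj E u v].
  apply: contraT => /existsPn none; move: (notq v).
  by rewrite (dominating_questioning sp vC) // => u uC; move: (none u); rewrite uC negbK.
by exists u.
Qed.

Definition rigid_graphs C : {set {set {set 'I_n}}} :=
  [set E | [&& simple_graph E, split_partition E C (~: C) & questioning E == set0]].

(* Maps sending every independent vertex to a proper subset of C (its
   neighbourhood) and every clique vertex to set0; the rigid ones moreover
   cover C. *)
Definition proper_codes C : {set {ffun 'I_n -> {set 'I_n}}} :=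
  [set f | f \in pffun_on set0 (~: C) (powerset C :\ C)].

Definition rigid_codes C : {set {ffun 'I_n -> {set 'I_n}}} :=
  [set f in proper_codes C | [forall u in C, exists v, u \in f v]].

Lemma proper_codesP C f : reflect
  ((forall v, v \in C -> f v = set0) /\ (forall v, v \notin C -> f v \proper C))
  (f \in proper_codes C).
Proof.
rewrite inE; apply: (iffP pffun_onP).
  case=> /supportP f0 fC; split=> v vC; first by apply: f0; rewrite in_setC negbK.
  have := fC (f v) (image_f f (_ : v \in ~: C)); rewrite in_setC => /(_ vC).
  by rewrite in_setD1 powersetE properEneq.
case=> f0 fC; split; first by apply/supportP => v; rewrite in_setC negbK; apply: f0.
by move=> _ /imageP[v vC ->]; rewrite in_setD1 powersetE -properEneq fC -?in_setC.
Qed.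

Lemma rigid_codesP C f : reflect
  [/\ forall v, v \in C -> f v = set0, forall v, v \notin C -> f v \proper C
    & forall u, u \in C -> exists v, u \in f v]
  (f \in rigid_codes C).
Proof.
rewrite inE; apply: (iffP andP) => [[/proper_codesP[f0 fC] /forall_inP cov] | [f0 fC cov]].
  by split=> // u /cov/existsP.
by split; [apply/proper_codesP | apply/forall_inP => u /cov/existsP].
Qed.

Definition encode C E : {ffun 'I_n -> {set 'I_n}} :=
  [ffun v => if v \in C then set0 else [set u in C | adj E u v]].

Definition code_adj C f : rel 'I_n :=
  fun x y => (x != y) && [|| (x \in C) && (y \in C), x \in f y | y \in f x].

Definition decode C f : {set {set 'I_n}} := graph_of (code_adj C f).

Lemma adj_decode C f : adj (decode C f) =2 code_adj C f.
Proof.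
by apply: adj_graph_of => x y; rewrite /code_adj eq_sym (andbC (y \in C)) (orbC (y \in f x)).
Qed.

Lemma code_adj_cross C f u v : (forall w, w \in C -> f w = set0) ->
  u \in C -> v \notin C -> code_adj C f u v = (u \in f v).
Proof.
move=> f0 uC vC; have uv : u != v by apply: contraNneq vC => <-.
by rewrite /code_adj uv uC (negbTE vC) (f0 u uC) in_set0 orbF.
Qed.

Lemma decode_rigid C f : f \in rigid_codes C -> decode C f \in rigid_graphs C.
Proof.
case/rigid_codesP=> f0 fC cov.
have fout v w : w \notin C -> (w \in f v) = false.
  move=> wC; apply: contraNF wC; apply/subsetP.
  by case: (boolP (v \in C)) => [/f0 -> | /fC /properP[]]; rewrite ?sub0set.
have sp : split_partition (decode C f) C (~: C).
  apply/split_partitionP; split=> //.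
    by apply/cliqueP => x y xC yC xy; rewrite adj_decode /code_adj xy xC yC.
  apply/indepP => x y; rewrite !in_setC adj_decode /code_adj => xC yC.
  by rewrite (negbTE xC) !fout ?andbF.
have sE : simple_graph (decode C f) by apply: graph_of_simple => x; rewrite /code_adj eqxx.
rewrite inE sE sp; apply/eqP/(questioning0_rigid sE sp); split=> [u uC | v vC].
  have [v uv] := cov u uC.
  have vC : v \notin C by apply: contraTN uv => /f0 ->; rewrite inE.
  by exists v; rewrite // adj_decode code_adj_cross.
have /properP[_ [u uC uv]] := fC v vC.
by exists u; rewrite // adj_decode code_adj_cross.
Qed.

Lemma encode_rigid C E : E \in rigid_graphs C -> encode C E \in rigid_codes C.
Proof.
rewrite inE => /and3P[sE sp /eqP/(questioning0_rigid sE sp)[nbC nbI]].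
apply/rigid_codesP; split=> [v vC | v vC | u uC]; rewrite ?ffunE ?vC ?(negbTE vC) //.
  apply/properP; split; first by apply/subsetP => u; rewrite inE => /andP[].
  by have [u uC nuv] := nbI v vC; exists u; rewrite // inE (negbTE nuv) andbF.
by have [w wC uw] := nbC u uC; exists w; rewrite ffunE (negbTE wC) inE uC uw.
Qed.

Lemma decodeK C f : f \in rigid_codes C -> encode C (decode C f) = f.
Proof.
case/rigid_codesP=> f0 fC _; apply/ffunP => v; rewrite ffunE.
case: ifPn => [/f0 // | vC]; have /properP[fsub _] := fC v vC.
apply/setP => u; rewrite inE adj_decode.
case: (boolP (u \in C)) => uC; first by rewrite code_adj_cross.
by apply/esym/negbTE; apply: contra uC; apply: (subsetP fsub).
Qed.

Lemma encodeK C E : E \in rigid_graphs C -> decode C (encode C E) = E.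
Proof.
rewrite inE => /and3P[sE /split_partitionP[_ /cliqueP cl /indepP ind] _].
apply: simple_graph_eq => //; first by apply: graph_of_simple => x; rewrite /code_adj eqxx.
move=> x y; rewrite adj_decode /code_adj !ffunE.
case: (eqVneq x y) => [<- | xy] /=; first by rewrite adj_irr.
case xC: (x \in C); case yC: (y \in C); rewrite /= ?inE ?xC ?yC ?orbF //=.
- by rewrite cl ?xC ?yC.
- by rewrite adjC.
- by apply/esym/negbTE/ind; rewrite in_setC ?xC ?yC.
Qed.

Lemma card_rigid_graphs C : #|rigid_graphs C| = #|rigid_codes C|.
Proof.
have -> : rigid_graphs C = decode C @: rigid_codes C.
  apply/setP => E; apply/idP/imsetP => [EG | [f fG ->]]; last exact: decode_rigid.
  by exists (encode C E); [apply: encode_rigid | rewrite encodeK].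
apply: card_in_imset => f g fG gG efg.
by rewrite -(decodeK fG) -(decodeK gG) efg.
Qed.

Lemma compl_rigid C E : E \in rigid_graphs C -> compl E \in rigid_graphs (~: C).
Proof.
rewrite !inE => /and3P[sE sp q0].
by rewrite compl_simple compl_split_partition // setCK sp compl_questioning.
Qed.

Lemma card_rigid_graphsC C : #|rigid_graphs (~: C)| = #|rigid_graphs C|.
Proof.
suff le A : #|rigid_graphs A| <= #|rigid_graphs (~: A)|.
  by apply/eqP; rewrite eqn_leq le -{2}(setCK C) le.
rewrite -(@card_in_imset _ _ compl (rigid_graphs A)).
  by apply: subset_leq_card; apply/subsetP => _ /imsetP[E EG ->]; apply: compl_rigid.
move=> E E' EG E'G eE; rewrite -(complK (E := E)) ?eE ?complK //.
  by move: E'G; rewrite inE => /and3P[].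
by move: EG; rewrite inE => /and3P[].
Qed.

Definition clique_side E : {set 'I_n} := odflt set0 [pick C | split_partition E C (~: C)].

Lemma clique_side_eq E C : questioning E = set0 ->
  split_partition E C (~: C) -> clique_side E = C.
Proof.
move=> q0 sp; rewrite /clique_side; case: pickP => [C' sp' | none] /=.
  exact: questioning0_unique q0 sp' sp.
by move: (none C); rewrite sp.
Qed.

Lemma H_sum : H n = \sum_(C : {set 'I_n}) #|rigid_graphs C|.
Proof.
rewrite /H -sum1_card (partition_big clique_side xpredT) //.
apply: eq_bigr => C _; rewrite -sum1_card; apply: eq_bigl => E; rewrite !inE.
apply/andP/and3P => [[/and3P[sE /existsP[C' /existsP[I sp]] q0] /eqP <-] | [sE sp q0]].
  have [eI _ _] := split_partitionP _ _ _ sp; subst I.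
  by rewrite (clique_side_eq (eqP q0) sp).
split; last by rewrite (clique_side_eq (eqP q0) sp).
by rewrite sE q0 andbT; apply/existsP; exists C; apply/existsP; exists (~: C).
Qed.

Lemma card_setC_ord C : #|~: C| = n - #|C|.
Proof. by rewrite cardsCs setCK card_ord. Qed.

Lemma card_proper_codes C : #|proper_codes C| = (2 ^ #|C| - 1) ^ (n - #|C|).
Proof.
rewrite cardsE card_pffun_on card_setC_ord -card_powerset.
by rewrite (cardsD1 C (powerset C)) powersetE subxx add1n subn1.
Qed.

Lemma rigid_codes_le C : #|rigid_codes C| <= (2 ^ #|C| - 1) ^ (n - #|C|).
Proof.
by rewrite -card_proper_codes subset_leq_card //; apply/subsetP => f; rewrite inE => /andP[].
Qed.

Definition missing_codes C u : {set {ffun 'I_n -> {set 'I_n}}} :=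
  [set f | f \in pffun_on set0 (~: C) (powerset (C :\ u))].

Lemma card_missing_codes C u : u \in C ->
  #|missing_codes C u| = (2 ^ (#|C| - 1)) ^ (n - #|C|).
Proof.
move=> uC; rewrite cardsE card_pffun_on card_powerset card_setC_ord.
by rewrite (cardsD1 u C) uC add1n subn1.
Qed.

Lemma proper_codes_cover C :
  proper_codes C \subset rigid_codes C :|: \bigcup_(u in C) missing_codes C u.
Proof.
apply/subsetP => f fP; rewrite inE; case: (boolP (f \in rigid_codes C)) => //= fR.
move: fR; rewrite inE fP /= => /forall_inPn[u uC /existsPn miss].
apply/bigcupP; exists u => //; move: fP; rewrite !inE.
case/pffun_onP => supp fC; apply/pffun_onP; split=> // _ /imageP[v vC ->].
have := fC _ (image_f f vC); rewrite !in_setD1 !powersetE => /andP[_ fvC].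
by apply/subsetP => w wf; rewrite in_setD1 (subsetP fvC w wf) andbT; apply: contraNneq (miss v) => <-.
Qed.


Lemma rigid_codes_ge C :
  (2 ^ #|C| - 1) ^ (n - #|C|) <= #|rigid_codes C| + #|C| * (2 ^ (#|C| - 1)) ^ (n - #|C|).
Proof.
rewrite -card_proper_codes (leq_trans (subset_leq_card (proper_codes_cover C))) //.
rewrite (leq_trans (leq_card_setU _ _)) // leq_add2l (leq_trans (card_bigcup_le _ _)) //.
by rewrite -sum_nat_const; apply: leq_sum => u uC; rewrite card_missing_codes.
Qed.

(* A single clique vertex can never be covered by proper neighbourhoods. *)
Lemma rigid_codes_single C : #|C| = 1 -> #|rigid_codes C| = 0.
Proof.
move/eqP/cards1P=> [u ->]; apply/eqP; rewrite cards_eq0; apply/eqP/setP => f.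
rewrite in_set0; apply/negP => /rigid_codesP[f0 fC cov].
have [v uv] := cov u (set11 u).
have vu : v \notin [set u] by apply: contraTN uv => /f0 ->; rewrite inE.
have /properP[_ [w]] := fC v vu.
by rewrite inE => /eqP ->; rewrite uv.
Qed.

End SplitGraphs.

Lemma exp_dominates b : 12 <= b -> 6 * b.+1 * 2 ^ b <= 3 ^ b.
Proof.
elim: b => [//|b IH] hb; rewrite !expnS.
have [b11 | b_ge12] := leqP b 11; last by have := IH b_ge12; nia.
have -> : b = 11 by lia.
lia.
Qed.

Lemma code_ratio c m : 2 <= c -> 3 ^ m * (2 ^ (c - 1)) ^ m <= 2 ^ m * (2 ^ c - 1) ^ m.
Proof.
move=> c2; rewrite -!expnMn; case: m => [//|m]; rewrite leq_exp2r //.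
have e : 2 ^ c = 2 * 2 ^ (c - 1) by rewrite -expnS subn1 prednK // ltnW.
have h : 2 <= 2 ^ (c - 1) by rewrite (leq_pexp2l (m := 2) (n1 := 1)) // subn_gt0.
by rewrite e; lia.
Qed.

Lemma few_missing_codes c m a : 2 <= c <= m -> 3 * a <= 2 * m + 2 -> 40 <= m ->
  (3 ^ a + 2 ^ a) * (c * (2 ^ (c - 1)) ^ m) <= 2 ^ a * (2 ^ c - 1) ^ m.
Proof.
move=> /andP[c2 cm] am m40; set X := (2 ^ (c - 1)) ^ m; set P := (2 ^ c - 1) ^ m.
have [b b12 mab] : exists2 b, 12 <= b & m = a + b by exists (m - a); lia.
have ratio : 3 ^ a * 3 ^ b * X <= 2 ^ a * 2 ^ b * P by rewrite -!expnD -mab code_ratio.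
have dom : 2 * c * 2 ^ b <= 3 ^ b.
  by apply: leq_trans (exp_dominates b12); rewrite leq_mul2r; lia.
have a23 : 2 ^ a <= 3 ^ a by elim: (a) => // k IH; rewrite !expnS leq_mul.
rewrite -(@leq_pmul2r (2 ^ b)) ?expn_gt0 //.
have sum3 : 3 ^ a + 2 ^ a <= 2 * 3 ^ a by lia.
have := leq_mul sum3 (leqnn (c * X * 2 ^ b)).
have := leq_mul (leqnn (3 ^ a * X)) dom.
lia.
Qed.

Section RealBound.
Local Open Scope R_scope.

Lemma INR_expn k m : INR (k ^ m)%N = INR k ^ m.
Proof. by elim: m => [|m IH] //; rewrite expnS mulnE mult_INR IH. Qed.

Lemma Rpower_ratio a : 2 ^ a / 3 ^ a = Rpower (3 / 2) (- INR a).
Proof.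
rewrite Rpower_Ropp Rpower_pow; last lra.
have nz : (3 / 2) ^ a <> 0 by apply: pow_nonzero; lra.
have e : (3 / 2) ^ a * 2 ^ a = 3 ^ a by rewrite -Rpow_mult_distr; congr (_ ^ _); field.
by rewrite -e; field; split=> //; apply: pow_nonzero; lra.
Qed.

Lemma real_bound (s h a n : nat) :
  (s * 3 ^ a <= (3 ^ a + 2 ^ a) * h)%N -> (n <= 3 * a)%N ->
  Rle (INR s) (Rmult (Rplus (INR 1) (Rpower (Rdiv (INR 3) (INR 2))
      (Rdiv (Ropp (INR n)) (INR 3)))) (INR h)).
Proof.
move=> /leP/le_INR hs /leP/le_INR hn.
rewrite !mult_INR plus_INR !INR_expn in hs; rewrite mult_INR in hn.
have e2 : INR 2 = 2 by rewrite /=; lra.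
have e3 : INR 3 = 3 by rewrite /=; lra.
rewrite [INR 1]/= e2 e3 in hs hn *.
have A3 : 0 < 3 ^ a by apply: pow_lt; lra.
have A2 : 0 < 2 ^ a by apply: pow_lt; lra.
have hpos : 0 <= INR h by apply: pos_INR.
have ratio : 2 ^ a / 3 ^ a <= Rpower (3 / 2) (- INR n / 3).
  by rewrite Rpower_ratio; apply: Rle_Rpower; lra.
have s_le : INR s <= (1 + 2 ^ a / 3 ^ a) * INR h.
  apply: (Rmult_le_reg_r (3 ^ a)) => //.
  by have -> : (1 + 2 ^ a / 3 ^ a) * INR h * 3 ^ a = (3 ^ a + 2 ^ a) * INR h by field; lra.
by apply: Rle_trans s_le _; apply: Rmult_le_compat_r => //; lra.
Qed.
End RealBound.

(* The summand of S n: the number of proper codes for a clique side of size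
   c <= n/2 (zero when c < 2), and its mirror image for c > n/2. *)
Definition code_bound (n c : nat) : nat := if 2 <= c then (2 ^ c - 1) ^ (n - c) else 0.

Definition S_term (n c : nat) : nat :=
  if c <= n./2 then code_bound n c else code_bound n (n - c).

Lemma sum_set_card n (F : nat -> nat) :
  \sum_(C : {set 'I_n}) F #|C| = \sum_(c < n.+1) 'C(n, c) * F c.
Proof.
have card_lt (C : {set 'I_n}) : #|C| < n.+1.
  by rewrite ltnS (leq_trans (max_card _)) ?card_ord.
rewrite (partition_big (fun C : {set 'I_n} => (inord #|C| : 'I_n.+1)) xpredT) //.
apply: eq_bigr => c _.
rewrite (_ : 'C(n, c) = #|[set A : {set 'I_n} | #|A| == c]|); last by rewrite card_draws card_ord.
rewrite -sum_nat_const.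
apply: eq_big => [C | C /eqP <-]; last by rewrite inordK.
by rewrite inE -val_eqE /= inordK.
Qed.

(* S n written as a sum over all subsets of 'I_n, using that the summand
   vanishes for c < 2 and for c >= n - 1. *)
Lemma S_sum n : 4 <= n -> S n = \sum_(C : {set 'I_n}) S_term n #|C|.
Proof.
move=> n4; rewrite sum_set_card -(big_mkord xpredT (fun c => 'C(n, c) * S_term n c)).
have outside c : c < 2 \/ n - 1 <= c -> 'C(n, c) * S_term n c = 0.
  by move=> hc; rewrite /S_term /code_bound; do 2 case: ifP => ?; rewrite ?muln0 //; lia.
rewrite (@big_cat_nat _ _ _ (n - 1) 0 n.+1) /=; [|lia|lia].
rewrite (@big_cat_nat _ _ _ (n./2).+1 0 (n - 1)) /=; [|lia|lia].
rewrite (@big_cat_nat _ _ _ 2 0 (n./2).+1) /=; [|lia|lia].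
have zero m p : (forall c, m <= c < p -> c < 2 \/ n - 1 <= c) ->
    \sum_(m <= c < p) 'C(n, c) * S_term n c = 0.
  by move=> out; rewrite big_nat_cond big1 // => c /andP[/out/outside].
rewrite (zero 0 2) ?(zero (n - 1) n.+1) => [|c|c]; try lia.
rewrite /S add0n addn0; congr (_ + _); apply: eq_big_nat => c hc; rewrite /S_term /code_bound.
  by have [-> ->] : c <= n./2 /\ 2 <= c by lia.
have [/ltn_geF -> -> cn] : [/\ n./2 < c, 2 <= n - c & c <= n] by split; lia.
by rewrite subKn.
Qed.

Lemma lower_from_defect P g X a : P <= g + X -> (3 ^ a + 2 ^ a) * X <= 2 ^ a * P ->
  P * 3 ^ a <= (3 ^ a + 2 ^ a) * g.
Proof.
move=> hP; have := leq_mul (leqnn (3 ^ a + 2 ^ a)) hP.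
move: (3 ^ a) (2 ^ a) => t3 t2; lia.
Qed.

(* Upper bound: a rigid graph with clique side of size c is determined by a
   proper code, and there is none for c < 2. *)
Lemma rigid_graphs_le n (C : {set 'I_n}) : 0 < n -> #|rigid_graphs C| <= code_bound n #|C|.
Proof.
move=> n0; rewrite card_rigid_graphs /code_bound; case: ifP => [_ | c2].
  exact: rigid_codes_le.
have [c0 | c1] : #|C| = 0 \/ #|C| = 1 by lia.
  by have := rigid_codes_le C; rewrite c0 subn0 expn0 subnn exp0n.
by rewrite rigid_codes_single.
Qed.

Lemma rigid_graphs_ge n (C : {set 'I_n}) a : 80 <= n -> #|C| <= n./2 -> 3 * a <= n + 2 ->
  code_bound n #|C| * 3 ^ a <= (3 ^ a + 2 ^ a) * #|rigid_graphs C|.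
Proof.
move=> n80 cn an; rewrite card_rigid_graphs /code_bound; case: ifP => // c2.
have few : (3 ^ a + 2 ^ a) * (#|C| * (2 ^ (#|C| - 1)) ^ (n - #|C|))
    <= 2 ^ a * (2 ^ #|C| - 1) ^ (n - #|C|) by apply: few_missing_codes; lia.
exact: lower_from_defect (rigid_codes_ge C) few.
Qed.

(* Both bounds transfer to the symmetric summand S_term via complementation. *)
Lemma rigid_graphs_le_term n (C : {set 'I_n}) : 0 < n -> #|rigid_graphs C| <= S_term n #|C|.
Proof.
move=> n0; rewrite /S_term; case: ifP => _; first exact: rigid_graphs_le.
by rewrite -card_rigid_graphsC -card_setC_ord rigid_graphs_le.
Qed.

Lemma rigid_graphs_ge_term n (C : {set 'I_n}) a : 80 <= n -> 3 * a <= n + 2 ->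
  S_term n #|C| * 3 ^ a <= (3 ^ a + 2 ^ a) * #|rigid_graphs C|.
Proof.
move=> n80 an; rewrite /S_term; case: ifP => cn; first exact: rigid_graphs_ge.
rewrite -card_rigid_graphsC -card_setC_ord rigid_graphs_ge // card_setC_ord.
have := max_card (mem C); rewrite card_ord; lia.
Qed.

Theorem lemma8p9 : exists N : nat, forall n : nat, (N <= n)%N ->
  (H n <= S n)%N /\
  Rle (INR (S n)) (Rmult (Rplus (INR 1) (Rpower (Rdiv (INR 3) (INR 2)) (Rdiv (Ropp (INR n)) (INR 3)))) (INR (H n))).
Proof.
exists 80 => n n80; have n0 : 0 < n by apply: leq_trans n80.
rewrite H_sum S_sum; last exact: leq_trans n80.
split; first by apply: leq_sum => C _; apply: rigid_graphs_le_term.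
apply: (@real_bound _ _ ((n + 2) %/ 3)); last lia.
rewrite big_distrl big_distrr /=; apply: leq_sum => C _.
by apply: rigid_graphs_ge_term => //; lia.
Qed.
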